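(* Let $(x^*,y^* )$ be an optimal solution of the LP relaxation of forest cover on $(G,w)$, $G^*$ the subgraph with vertex set $\{i:x^*_i>0\}$ and edge set $\{(i,j):y^*_{ij}>0\}$, and $C=(V_C,E_C)$ any connected component of $G^*$ with at least one edge. Let $M$ be a minimum spanning tree of $C$ (w.r.t. $w$) computed by Kruskal's algorithm and $T=(V_T,E_T)$ the tree obtained from $M$ by deleting every degree-one vertex $i$ of $M$ with $x^*_i<1/2$ together with its incident edge. Then $$\sum_{i\in V_C}x^*_i-\sum_{(i,j)\in E_C}y^*_{ij}(1-w_{ij})\;\ge\;\frac12\Big[|V_T|-\sum_{(i,j)\in E_T}(1-w_{ij})\Big].$$
   Context: Graph $G=(V,E)$ with edge weights $w:E\to[0,1]$. For $S\subseteq V$, $E(S)$ denotes the edges with both endpoints in $S$. The LP relaxation of forest cover: minimize $\sum_{i\in V}x_i-\sum_{(i,j)\in E}y_{ij}(1-w_{ij})$ subject to $x_i+x_j\ge1$ and $x_i\ge y_{ij}$, $x_j\ge y_{ij}$ for all $(i,j)\in E$; $\sum_{i\in S}x_i-\sum_{(i,j)\in E(S)}y_{ij}\ge1$ for all $S\subseteq V$ with $E(S)\ne\emptyset$; $0\le x,y\le1$. *)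

From HB Require Import structures.
From mathcomp Require Import all_boot all_order all_algebra.
Set Implicit Arguments. Unset Strict Implicit. Unset Printing Implicit Defensive.
Import Order.TTheory GRing.Theory Num.Theory.
Local Open Scope ring_scope.

(* Graph conventions: vertex set is a finType V; an edge is an unordered
   pair {i,j} represented as a 2-element set; an edge set is F : {set {set V}}. *)

Section Defs.
Variables (R : realFieldType) (V : finType).

Definition adj (F : {set {set V}}) : rel V := fun i j => [set i; j] \in F.

Definition edges_in (F : {set {set V}}) (S : {set V}) : {set {set V}} :=
  [set f in F | f \subset S].

Definition simple_graph (E : {set {set V}}) : Prop :=
  forall f, f \in E -> #|f| = 2%N.

Definition fc_feasible (E : {set {set V}}) (x : V -> R) (y : {set V} -> R) : Prop :=
  [/\ forall i j, [set i; j] \in E ->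
        [/\ x i + x j >= 1, x i >= y [set i; j] & x j >= y [set i; j]],
      forall S : {set V}, edges_in E S != set0 ->
        \sum_(i in S) x i - \sum_(f in edges_in E S) y f >= 1,
      forall i, 0 <= x i <= 1
    & forall f, f \in E -> 0 <= y f <= 1].

Definition fc_obj (E : {set {set V}}) (w : {set V} -> R)
  (x : V -> R) (y : {set V} -> R) : R :=
  \sum_(i : V) x i - \sum_(f in E) y f * (1 - w f).

Definition fc_optimal E w x y : Prop :=
  fc_feasible E x y /\
  forall x' y', fc_feasible E x' y' -> fc_obj E w x y <= fc_obj E w x' y'.

Definition acyclic (F : {set {set V}}) : Prop :=
  forall c : seq V, uniq c -> (2 < size c)%N -> ~~ cycle (adj F) c.

Definition spanning_tree (VC : {set V}) (EC M : {set {set V}}) : Prop :=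
  [/\ M \subset EC,
      (forall i j, i \in VC -> j \in VC -> connect (adj M) i j)
    & acyclic M].

Definition weight (w : {set V} -> R) (F : {set {set V}}) : R := \sum_(f in F) w f.

Definition min_spanning_tree (w : {set V} -> R) (VC : {set V}) (EC M : {set {set V}}) : Prop :=
  spanning_tree VC EC M /\
  forall M', spanning_tree VC EC M' -> weight w M <= weight w M'.

Definition degree (F : {set {set V}}) (i : V) : nat := #|[set f in F | i \in f]|.

End Defs.

From HB Require Import structures.
From mathcomp Require Import all_boot all_order all_algebra.
From mathcomp Require Import zify ring lra.
Set Implicit Arguments. Unset Strict Implicit. Unset Printing Implicit Defensive.
Import Order.TTheory GRing.Theory Num.Theory.

(* For a threshold [t], let [light] be the edges of [M] of weight [< t]. By the cycle
   property of the minimum spanning tree [M], every edge of [C] of weight [< t] has both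
   endpoints in one component of [light], so the LP constraint for each nontrivial
   component [K] reads [x(K) - y(light edges of C in K) >= 1]. Counting edges of the
   forests [M] and [light] bounds [|V_T|] by the number of these components, the light
   edges of [E_T], and the vertices of [V_T] that no light edge covers; the latter are
   controlled by the covering constraints [x_i + x_j >= 1] on the edges of [M], because a
   kept vertex with [x_i < 1/2] is not a leaf of [M]. For every [t] this gives
     [x(V_C) - |V_T|/2 - \sum_(e in E_C, w_e < t) y_e + |{e in E_T | w_e < t}|/2 >= 0],
   and integrating over [t \in [0, 1]] (a layer-cake argument) yields the theorem.
   Only the feasibility of [(x, y)] is used. *)

Section Graphs.
Variable V : finType.
Implicit Types (G H : {set {set V}}) (S : {set V}).

Lemma adj_sym G : symmetric (adj G).
Proof. by move=> i j; rewrite /adj setUC. Qed.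

Lemma connect_adjC G : connect_sym (adj G).
Proof. exact/sym_connect_sym/adj_sym. Qed.

Lemma adj_irrefl G i : simple_graph G -> adj G i i = false.
Proof. by move=> sG; apply/negP=> /sG; rewrite setUid cards1. Qed.

Lemma adj_neq G i j : simple_graph G -> adj G i j -> i != j.
Proof. by move=> sG h; apply/eqP=> eij; move: h; rewrite eij adj_irrefl. Qed.

Lemma adjS G H : G \subset H -> subrel (adj G) (adj H).
Proof. by move=> sub i j; rewrite /adj => /(subsetP sub). Qed.

Lemma connectS G H i j : G \subset H -> connect (adj G) i j -> connect (adj H) i j.
Proof. by move=> sub; apply: connect_sub => u v h; apply/connect1/(adjS sub). Qed.

Lemma acyclicS G H : G \subset H -> acyclic H -> acyclic G.
Proof.
move=> sub ac c uq sz; apply/negP => cy.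
by move: (ac c uq sz); rewrite (sub_cycle (adjS sub) cy).
Qed.

Lemma simple_graphS G H : G \subset H -> simple_graph H -> simple_graph G.
Proof. by move=> sub sH f /(subsetP sub) /sH. Qed.

Lemma simple_edgeP G f : simple_graph G -> f \in G ->
  exists i j, [/\ i != j, f = [set i; j] & adj G i j].
Proof.
move=> sG fG; have /cards2P [i [j [nij ef]]] : #|f| == 2 by rewrite sG.
by exists i, j; split=> //; rewrite /adj -ef.
Qed.

Lemma edge_through G f u : simple_graph G -> f \in G -> u \in f ->
  exists v, f = [set u; v] /\ adj G u v.
Proof.
move=> sG fG uf; case: (simple_edgeP sG fG) => [a [b [_ ef ab]]].
move: uf; rewrite ef !inE => /orP [/eqP ->|/eqP ->]; first by exists b.
by exists a; rewrite setUC adj_sym.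
Qed.

Lemma set2_injr (a b v : V) : [set a; v] = [set a; b] -> v = b.
Proof.
move=> e; have : v \in [set a; b] by rewrite -e !inE eqxx orbT.
rewrite !inE => /orP [/eqP va|/eqP //].
have : b \in [set a; v] by rewrite e !inE eqxx orbT.
by rewrite !inE va orbb => /eqP ->.
Qed.

Lemma set2_eq_cases (a b u v : V) :
  [set u; v] = [set a; b] -> (u = a /\ v = b) \/ (u = b /\ v = a).
Proof.
move=> e; have : u \in [set a; b] by rewrite -e !inE eqxx.
rewrite !inE => /orP [/eqP ua|/eqP ub].
  by left; split=> //; move: e; rewrite ua => /set2_injr.
by right; split=> //; apply: (@set2_injr b); rewrite [RHS]setUC -e ub.
Qed.

Lemma connect_upathP (e : rel V) x y : connect e x y ->
  exists p, [/\ path e x p, uniq (x :: p) & last x p = y].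
Proof.
by move/connectP=> [p pth ->]; case: (shortenP pth) => p' ? ? _; exists p'.
Qed.

Lemma adj_setU1 f G u v : adj (f |: G) u v = ([set u; v] == f) || adj G u v.
Proof. by rewrite /adj !inE. Qed.

Lemma adj_setU1_avoid G a b :
  {in predC1 a &, subrel (adj ([set a; b] |: G)) (adj G)}.
Proof.
move=> u v ua va; rewrite adj_setU1 => /orP [/eqP e|//].
by case: (set2_eq_cases e) => [[ua' _]|[_ va']];
  [move: ua | move: va]; rewrite !inE ?ua' ?va' eqxx.
Qed.

Lemma adj_setD1_avoid G a b :
  {in predC1 a &, subrel (adj G) (adj (G :\ [set a; b]))}.
Proof.
move=> u v ua va h; rewrite /adj in h *; rewrite !inE h andbT; apply/eqP => e.
by case: (set2_eq_cases e) => [[ua' _]|[_ va']];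
  [move: ua | move: va]; rewrite !inE ?ua' ?va' eqxx.
Qed.

End Graphs.

Section Forests.
Variable V : finType.
Implicit Types (G H : {set {set V}}) (S B : {set V}).

Lemma acyclic_setD1_disconnect G a b : simple_graph G -> acyclic G ->
  [set a; b] \in G -> ~~ connect (adj (G :\ [set a; b])) a b.
Proof.
move=> sG ac eG; apply/negP => /connect_upathP [p [pth uq lst]].
have nab : a != b by apply: (adj_neq sG eG).
case: p pth uq lst => [|y q] pth uq lst; first by move: nab; rewrite -lst /= eqxx.
have sz : 2 < size (a :: y :: q).
  case: q pth uq lst => [|z q] //= pth _ lst.
  by move: pth; rewrite /= lst /adj !inE eqxx andbT.
move: (ac _ uq sz); rewrite /cycle rcons_path.
have -> : path (adj G) a (y :: q) by apply: sub_path pth; apply/adjS/subsetDl.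
by rewrite lst /= /adj setUC eG.
Qed.

Lemma acyclic_setU1 G a b : acyclic G -> ~~ connect (adj G) a b ->
  acyclic ([set a; b] |: G).
Proof.
move=> ac nc c uq sz; apply/negP => cy.
have avoid := @adj_setU1_avoid _ G a b.
case ac_in: (a \in c); last first.
  have : all (predC1 a) c.
    by apply/allP => u uc; rewrite !inE; apply/eqP => ua; move: ac_in; rewrite -ua uc.
  by move/(sub_in_cycle avoid)/(_ cy); rewrite (negbTE (ac c uq sz)).
case: (rot_to ac_in) => i p rc.
have uq' : uniq (a :: p) by rewrite -rc rot_uniq.
have sz' : 2 < size (a :: p) by rewrite -rc size_rot.
have cy' : cycle (adj ([set a; b] |: G)) (a :: p) by rewrite -rc rot_cycle.
clear rc; case: p uq' sz' cy' => [|y q] // uq' sz' cy'.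
move: cy'; rewrite /cycle rcons_path /= => /andP [/andP [s1 pq] sl].
have anq : a \notin y :: q by move: uq'; rewrite cons_uniq => /andP [].
have pq' : path (adj G) y q.
  apply: (sub_in_path avoid) pq; apply/allP => u uq2; rewrite !inE; apply/eqP => ua.
  by move: anq; rewrite -ua uq2.
move: s1 sl; rewrite !adj_setU1 => /orP [/eqP e1|g1] /orP [/eqP e2|g2].
- have yb : y = b by apply: (set2_injr e1).
  have lb : last y q = b by apply: (@set2_injr _ a); rewrite [LHS]setUC.
  have yq : y \notin q by move: uq' => /= /andP [_ /andP []].
  case: q {pq pq' anq uq' e2} sz' lb yq => [|z q] //= _ lb.
  by rewrite yb -lb mem_last.
- have yb : y = b by apply: (set2_injr e1).
  move/negP: nc; apply; rewrite connect_adjC -yb.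
  apply/connectP; exists (rcons q a); first by rewrite rcons_path pq' g2.
  by rewrite last_rcons.
- have : [set a; last y q] = [set a; b] by rewrite setUC.
  move/set2_injr => lb; move/negP: nc; apply; apply/connectP.
  by exists (y :: q); rewrite /= ?g1 ?pq' ?lb.
- by move: (ac _ uq' sz'); rewrite /cycle rcons_path /= g1 pq' g2.
Qed.

(* Otherwise [x :: y :: ... :: z] would be a cycle. *)
Lemma acyclic_path_extend G x y q z : simple_graph G -> acyclic G ->
  uniq (x :: y :: q) -> path (adj G) x (y :: q) -> adj G x z -> z != y ->
  z \notin x :: y :: q.
Proof.
move=> sG ac uq pth axz nzy; apply/negP => zc.
have zx : z != x by rewrite eq_sym (adj_neq sG axz).
have zq : z \in q by move: zc; rewrite !inE (negbTE zx) (negbTE nzy).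
case/splitPr: zq uq pth => q1 q2 uq pth.
have sz : 2 < size (x :: y :: rcons q1 z) by rewrite /= size_rcons.
have uq' : uniq (x :: y :: rcons q1 z).
  by move: uq; rewrite -cat_rcons -!cat_cons cat_uniq => /andP [].
move: (ac _ uq' sz); rewrite /cycle rcons_path.
move: pth; rewrite -cat_rcons -cat_cons cat_path => /andP [-> _] /=.
by rewrite last_rcons adj_sym axz.
Qed.

Definition simple_path_in G S (c : seq V) :=
  [&& uniq c, all (mem S) c & (if c is x :: p then path (adj G) x p else true)].

Lemma simple_path_in_size G S c : simple_path_in G S c -> size c <= #|S|.
Proof.
move=> /and3P [uq al _]; rewrite -(card_uniqP uq); apply: subset_leq_card.
by apply/subsetP => v; move/allP: al => al /al.
Qed.

(* The head of a longest simple path is a leaf. *)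
Lemma acyclic_leaf G S : simple_graph G -> acyclic G -> edges_in G S != set0 ->
  exists2 x, x \in S & #|[set f in edges_in G S | x \in f]| <= 1.
Proof.
move=> sG ac /set0Pn [f]; rewrite inE => /andP [fG fS].
case: (simple_edgeP sG fG) => [i [j [nij ef aij]]].
pose P n := [exists t : n.-tuple V, simple_path_in G S t].
have P2 : P 2.
  apply/existsP; exists (in_tuple [:: i; j]) => /=.
  rewrite /simple_path_in /= inE nij andbT aij andbT.
  by move/subsetP: fS => fS; rewrite !fS // ef !inE eqxx ?orbT.
have ubP n : P n -> n <= #|S|.
  by move=> /existsP [t ct]; move: (simple_path_in_size ct); rewrite size_tuple.
case: (ex_maxnP (ex_intro _ 2 P2) ubP) => n /existsP [t ct] maxn.
have n2 : 2 <= n by apply: maxn.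
move: ct (size_tuple t); case: (tval t) => [|x [|y q]] /= ct szn;
  try by move: n2; rewrite -szn.
move: (ct) => /and3P [uq al pth].
exists x; first by move/allP: al; apply; rewrite inE eqxx.
have key g : g \in edges_in G S -> x \in g -> g = [set x; y].
  rewrite inE => /andP [gG gS] xg; case: (edge_through sG gG xg) => z [eg axz].
  have zS : z \in S by move/subsetP: gS; apply; rewrite eg !inE eqxx orbT.
  rewrite eg; congr (_ |: _); congr [set _]; apply/eqP/negP => /negP nzy.
  have zc := acyclic_path_extend sG ac uq pth axz nzy.
  have : P (size (z :: x :: y :: q)).
    apply/existsP; exists (in_tuple (z :: x :: y :: q)) => /=.
    rewrite /simple_path_in /= (negbTE zc) zS /= adj_sym axz.
    by move: ct; rewrite /simple_path_in /= => /and3P [-> -> ->].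
  by move/maxn; rewrite /= -szn ltnn.
apply: (@leq_trans #|[set [set x; y]]|); last by rewrite cards1.
apply: subset_leq_card; apply/subsetP => g; rewrite inE => /andP [g1 g2].
by rewrite inE (key g g1 g2).
Qed.

Lemma acyclic_card_edges_lt G S : simple_graph G -> acyclic G -> S != set0 ->
  #|edges_in G S| < #|S|.
Proof.
move=> sG ac; have [n] := ubnP #|S|; elim: n S => // n IH S /ltnSE Sle ne.
case e0: (edges_in G S == set0); first by rewrite (eqP e0) cards0 card_gt0.
case: (acyclic_leaf sG ac (negbT e0)) => x xS lx.
have sub : edges_in G S \subset
    edges_in G (S :\ x) :|: [set f in edges_in G S | x \in f].
  apply/subsetP => f fE; move: (fE); rewrite inE => /andP [fG fS].
  rewrite !inE fG fS /=; case xf: (x \in f); first by rewrite orbT.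
  rewrite orbF; apply/subsetP => v vf.
  by rewrite !inE (subsetP fS) // andbT; apply/eqP => vx; move: xf; rewrite -vx vf.
have ne' : S :\ x != set0.
  case/set0Pn: (negbT e0) => f; rewrite inE => /andP [fG fS].
  case: (simple_edgeP sG fG) => [u [v [nuv ef _]]].
  have uS : u \in S by rewrite (subsetP fS) // ef !inE eqxx.
  have vS : v \in S by rewrite (subsetP fS) // ef !inE eqxx orbT.
  apply/set0Pn; case: (eqVneq u x) => [ux|ux]; last by exists u; rewrite !inE ux.
  by exists v; rewrite !inE vS andbT -ux eq_sym.
have cS : #|S| = (#|S :\ x|).+1 by rewrite (cardsD1 x S) xS.
rewrite cS in Sle *; have IH' := IH (S :\ x) Sle ne'.
apply: (leq_ltn_trans (subset_leq_card sub)).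
apply: (leq_ltn_trans (leq_card_setU _ _)).
by rewrite -addSn; apply: (leq_trans (leq_add IH' lx)); rewrite addn1.
Qed.

(* The length of a shortest [e]-path from [v] to [r] ([#|V|] if there is none). *)
Definition dist_to (e : rel V) r v :=
  find (fun n => [exists t : n.-tuple V, path e v t && (last v t == r)])
       (iota 0 #|V|).

Lemma dist_to_step (e : rel V) r v : connect e v r -> v != r ->
  exists2 u, e v u & dist_to e r u < dist_to e r v.
Proof.
pose Q v n := [exists t : n.-tuple V, path e v t && (last v t == r)].
have hasQ u : connect e u r -> has (Q u) (iota 0 #|V|).
  move=> /connect_upathP [p [pth uq lst]]; apply/hasP; exists (size p).
    rewrite mem_iota /= add0n; move: (max_card (mem (u :: p))).
    by rewrite (card_uniqP uq).
  by apply/existsP; exists (in_tuple p); rewrite pth lst eqxx.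
move=> cv nvr; have hv := hasQ v cv.
have dvV : find (Q v) (iota 0 #|V|) < #|V| by move: hv; rewrite has_find size_iota.
have := nth_find 0 hv; rewrite nth_iota ?add0n // => /existsP [t /andP [pth /eqP lst]].
move: pth lst (size_tuple t); case: (tval t) => [|u t'] /=.
  by move=> _ ev; move: nvr; rewrite ev eqxx.
move=> /andP [evu pth] lst szt; exists u => //.
change (find (Q u) (iota 0 #|V|) < find (Q v) (iota 0 #|V|)).
apply: (@leq_ltn_trans (size t')); last by rewrite -szt.
rewrite leqNgt; apply/negP => ltn.
have t'V : size t' < #|V| by rewrite (ltn_trans _ dvV) // -szt.
move: (before_find 0 ltn); rewrite nth_iota // add0n => /negbT/negP; apply.
by rewrite /Q; apply/existsP; exists (in_tuple t'); rewrite pth lst eqxx.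
Qed.

(* Orienting each vertex towards [r] along a shortest path injects [B :\ r] into the edges. *)
Lemma connected_card_le_edges G B r : simple_graph G -> r \in B ->
  (forall v, v \in B -> connect (adj G) v r) ->
  (forall u v, u \in B -> adj G u v -> v \in B) ->
  #|B| <= (#|edges_in G B|).+1.
Proof.
move=> sG rB conn clos; set d := dist_to (adj G) r.
pose par v := odflt v [pick u | adj G v u && (d u < d v)].
have parP v : v \in B -> v != r -> adj G v (par v) && (d (par v) < d v).
  move=> vB nvr; rewrite /par; case: pickP => [u //|none].
  by case: (dist_to_step (conn v vB) nvr) => u avu ltu; move: (none u); rewrite avu ltu.
pose phi v := [set v; par v].
have inj : {in B :\ r &, injective phi}.
  move=> v v'; rewrite !inE => /andP [nvr vB] /andP [nv'r v'B] e.
  case: (set2_eq_cases e) => [[-> //]|[e1 e2]].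
  move: (parP v vB nvr) (parP v' v'B nv'r); rewrite e2 -e1 => /andP [_ l1] /andP [_ l2].
  by move: (ltn_trans l1 l2); rewrite ltnn.
have sub : phi @: (B :\ r) \subset edges_in G B.
  apply/subsetP => f /imsetP [v]; rewrite !inE => /andP [nvr vB] ->.
  have /andP [a _] := parP v vB nvr; apply/andP; split; first exact: a.
  by apply/subsetP => z; rewrite !inE => /orP [/eqP -> //|/eqP ->]; apply: clos a.
rewrite (cardsD1 r B) rB add1n ltnS -(card_in_imset inj).
exact: subset_leq_card.
Qed.

End Forests.

Section Exchange.
Variable V : finType.
Implicit Types (G M : {set {set V}}).

Lemma path_cross (e : rel V) (P : pred V) x p : P x -> ~~ P (last x p) -> path e x p ->
  exists p1 b p2, [/\ p = p1 ++ b :: p2, P (last x p1), ~~ P b & e (last x p1) b].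
Proof.
elim: p x => [|y q IH] x Px /=; first by rewrite Px.
move=> nPl /andP [exy pq]; case Py: (P y).
  case: (IH y Py nPl pq) => p1 [b [p2 [ep Pl nPb eb]]].
  by exists (y :: p1), b, p2; split=> //=; rewrite ep.
by exists [::], y, q; split=> //=; rewrite Py.
Qed.

Lemma connect_setD1_side G a b u : connect (adj G) u a ->
  connect (adj (G :\ [set a; b])) u a \/ connect (adj (G :\ [set a; b])) u b.
Proof.
move=> /connect_upathP [q [pth uq lst]].
case/lastP: q pth uq lst => [|q' z] /=; first by move=> _ _ ->; left; apply: connect0.
rewrite last_rcons => pth uq za; move: pth uq; rewrite za rcons_path => /andP [pq' al] uq.
have anq : a \notin u :: q'.
  move: uq; rewrite mem_rcons rcons_uniq !inE negb_or => /andP [/andP [ua _] /andP [aq _]].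
  by rewrite negb_or eq_sym ua aq.
have pq'' : path (adj (G :\ [set a; b])) u q'.
  apply: (sub_in_path (@adj_setD1_avoid _ G a b)) pq'; apply/allP => v vq; rewrite !inE.
  by apply/eqP => va; move: anq; rewrite -va vq.
case e: ([set last u q'; a] == [set a; b]).
  right; apply/connectP; exists q' => //.
  by symmetry; apply: (@set2_injr _ a); rewrite [LHS]setUC (eqP e).
left; apply/connectP; exists (rcons q' a); last by rewrite last_rcons.
by rewrite /adj in al; rewrite rcons_path pq'' /adj !inE e al.
Qed.

Lemma spanning_tree_exchange (VC : {set V}) (EC M : {set {set V}}) a b i j :
  simple_graph M -> spanning_tree VC EC M -> [set a; b] \in M ->
  [set i; j] \in EC -> a \in VC ->
  connect (adj (M :\ [set a; b])) i a -> connect (adj (M :\ [set a; b])) b j ->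
  spanning_tree VC EC ([set i; j] |: (M :\ [set a; b])).
Proof.
move=> sM [MEC conn ac] eM fEC aVC c_ia c_bj.
set e := [set a; b] in eM c_ia c_bj *; set M' := [set i; j] |: (M :\ e).
have subM' : M :\ e \subset M' by apply: subsetUr.
have ncij : ~~ connect (adj (M :\ e)) i j.
  apply/negP => cij; move/negP: (acyclic_setD1_disconnect sM ac eM); apply.
  rewrite connect_adjC in c_ia; apply: (connect_trans c_ia).
  by apply: (connect_trans cij); rewrite connect_adjC.
have c_ab : connect (adj M') a b.
  apply: (@connect_trans _ _ i); first by rewrite connect_adjC; exact: connectS c_ia.
  apply: (@connect_trans _ _ j); first by apply: connect1; rewrite /adj !inE eqxx.
  by rewrite connect_adjC; exact: connectS c_bj.
have c_ua u : u \in VC -> connect (adj M') u a.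
  move=> uVC; case: (connect_setD1_side b (conn u a uVC aVC)) => h.
    exact: connectS subM' h.
  by apply: (connect_trans (connectS subM' h)); rewrite connect_adjC.
split.
- apply/subsetP => g; rewrite !inE => /orP [/eqP -> //|/andP [_ gM]].
  exact: (subsetP MEC).
- move=> u v uVC vVC; apply: (connect_trans (c_ua u uVC)).
  by rewrite connect_adjC; apply: c_ua.
- by apply: acyclic_setU1 ncij; apply: acyclicS ac; exact: subsetDl.
Qed.

Local Open Scope ring_scope.

(* Otherwise the [i]-[j] path of [M] leaves the light component of [i] through an edge of
   weight [>= t], which could be exchanged for the lighter edge [{i,j}]. *)
Lemma mst_cycle_property (R : realFieldType) (w : {set V} -> R) (VC : {set V})
    (EC M : {set {set V}}) (t : R) (i j : V) :
  simple_graph EC -> (forall g, g \in EC -> g \subset VC) ->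
  min_spanning_tree w VC EC M -> [set i; j] \in EC -> w [set i; j] < t ->
  connect (adj [set g in M | w g < t]) i j.
Proof.
move=> sEC inVC [[MEC conn ac] minM] fEC wf; set F := [set g in M | w g < t].
apply/negPn/negP => nc.
have sM : simple_graph M by apply: simple_graphS MEC sEC.
have iVC : i \in VC by apply: (subsetP (inVC _ fEC)); rewrite !inE eqxx.
have jVC : j \in VC by apply: (subsetP (inVC _ fEC)); rewrite !inE eqxx orbT.
case: (connect_upathP (conn i j iVC jVC)) => p [pth uq lst].
have := @path_cross (adj M) (connect (adj F) i) i p (connect0 _ _).
rewrite lst => /(_ nc pth) [p1 [b [p2 [ep ca nb eM]]]].
set a := last i p1 in ca eM; set e := [set a; b]; have {}eM : e \in M := eM.
have we : t <= w e.
  rewrite leNgt; apply/negP => lt; move/negP: nb; apply.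
  by apply: (connect_trans ca); apply: connect1; rewrite /adj inE eM.
have FMe : F \subset M :\ e.
  apply/subsetP => g; rewrite !inE => /andP [gM wg]; rewrite gM andbT.
  by apply/eqP => ge; move: wg; rewrite ge ltNge we.
have anb : a \notin b :: p2.
  move: uq; rewrite ep -cat_cons cat_uniq => /and3P [_ h _].
  by apply/negP => ab2; move/hasP: h; apply; exists a => //; apply: mem_last.
have c_bj : connect (adj (M :\ e)) b j.
  apply/connectP; exists p2; last by rewrite -lst ep last_cat.
  move: pth; rewrite ep cat_path => /andP [_ /= /andP [_ pb]].
  apply: (sub_in_path (@adj_setD1_avoid _ M a b)) pb; apply/allP => v vq.
  by rewrite !inE; apply/eqP => va; move: anb; rewrite -va vq.
have fM : [set i; j] \notin M.
  by apply/negP => fM; move/negP: nc; apply; apply: connect1; rewrite /adj inE fM wf.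
have aVC : a \in VC by apply: (subsetP (inVC _ (subsetP MEC _ eM))); rewrite !inE eqxx.
have := minM _ (spanning_tree_exchange sM (And3 MEC conn ac) eM fEC aVC
                  (connectS FMe ca) c_bj).
rewrite /weight big_setU1 /=; last by rewrite !inE negb_and fM orbT.
rewrite (big_setD1 e eM) /= [w [set i; j] + _]addrC [w e + _]addrC lerD2l => wef.
by move: (lt_le_trans (le_lt_trans wef wf) we); rewrite ltxx.
Qed.

End Exchange.

Section Sums.
Local Open Scope ring_scope.
Variables (R : realFieldType) (T : finType).

Lemma ler_sum_subpred (P Q : pred T) (g : T -> R) :
  (forall i, P i -> Q i) -> (forall i, Q i -> 0 <= g i) ->
  \sum_(i | P i) g i <= \sum_(i | Q i) g i.
Proof.
move=> PQ g0; rewrite [leRHS](bigID P) /=.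
have -> : \sum_(i | Q i && P i) g i = \sum_(i | P i) g i.
  by apply: eq_bigl => i; case Pi: (P i); rewrite ?andbT ?andbF // PQ.
by rewrite lerDl; apply: sumr_ge0 => i /andP [qi _]; apply: g0.
Qed.

(* Layer-cake argument: [s K + \sum_i c_i (s - a_i)] is the integral over
   [tau \in [0, s]] of [K + \sum_(a_i < tau) c_i]. *)
Lemma layer_cake_ge0 (I : {set T}) (a c : T -> R) (K s : R) :
  0 <= s -> (forall i, i \in I -> 0 <= a i <= s) ->
  (forall tau, 0 <= K + \sum_(i in I | a i < tau) c i) ->
  0 <= s * K + \sum_(i in I) c i * (s - a i).
Proof.
have [n] := ubnP #|I|; elim: n I s => // n IH I s /ltnSE Ile s0 aI hyp.
case: (set_0Vmem I) => [I0 | [i0 i0I]].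
  rewrite I0 big_set0 addr0; apply: mulr_ge0 s0 _.
  by have := hyp 0; rewrite I0 big_pred0 ?addr0 // => i; rewrite in_set0.
case: (@arg_maxP _ _ _ i0 (mem I) a i0I) => m mI mmax0.
have mmax j : j \in I -> a j <= a m by move/mmax0.
set I' := [set i in I | a i != a m].
have I'lt : (#|I'| < #|I|)%N.
  apply: proper_card; apply/properP; split.
    by apply/subsetP => i; rewrite inE => /andP [].
  by exists m => //; rewrite inE eqxx andbF.
have /andP [am0 ams] := aI m mI.
have hI' : 0 <= a m * K + \sum_(i in I') c i * (a m - a i).
  apply: IH => //; first exact: leq_trans I'lt _.
    move=> i; rewrite inE => /andP [iI _]; rewrite (mmax i iI) andbT.
    by case/andP: (aI i iI).
  move=> tau; have := hyp (Order.min tau (a m)).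
  rewrite (@eq_bigl _ _ _ _ _ (fun i => (i \in I) && (a i < Order.min tau (a m)))
                    (fun i => (i \in I') && (a i < tau))) //.
  move=> i; rewrite inE; case iI: (i \in I) => //=.
  by rewrite lt_min andbC lt_neqAle (mmax i iI) andbT.
have hall : 0 <= K + \sum_(i in I) c i.
  have := hyp (s + 1); rewrite (@eq_bigl _ _ _ _ _ _ (fun i => i \in I)) //.
  move=> i; case iI: (i \in I) => //=.
  by case/andP: (aI i iI) => _ h; apply: (le_lt_trans h); rewrite ltrDl ltr01.
rewrite (bigID (fun i => a i == a m)) /=.
rewrite (@eq_bigr _ _ _ _ _ _ _ (fun i => c i * (s - a m))); last first.
  by move=> i /andP [_ /eqP ->].
rewrite -mulr_suml.
have -> : \sum_(i in I | a i != a m) c i * (s - a i) =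
    \sum_(i in I') c i * (a m - a i) + (s - a m) * \sum_(i in I | a i != a m) c i.
  rewrite mulr_sumr (@eq_bigl _ _ _ _ _ (fun i => i \in I')
                        (fun i => (i \in I) && (a i != a m))); last by move=> i; rewrite inE.
  by rewrite -big_split /=; apply: eq_bigr => i _; ring.
move: hall; rewrite (bigID (fun i => a i == a m)) /= => hall.
have sm : 0 <= s - a m by rewrite subr_ge0.
have h3 := mulr_ge0 sm hall.
set SE := \sum_(i in I | a i == a m) c i in h3 *.
set SN := \sum_(i in I | a i != a m) c i in h3 *.
set B' := \sum_(i in I') c i * (a m - a i) in hI' *.
nra.
Qed.

End Sums.

Lemma card_fibers (T J : finType) (A : {set T}) (B : {set J}) (p : T -> J) :
  (forall u, u \in A -> p u \in B) -> #|A| = (\sum_(j in B) #|[set u in A | p u == j]|)%N.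
Proof.
move=> h; rewrite -sum1_card (partition_big p (mem B)) //.
by apply: eq_bigr => j _; rewrite sum1dep_card.
Qed.

Section Component.
Local Open Scope ring_scope.
Variables (R : realFieldType) (V : finType).
Variables (E : {set {set V}}) (w : {set V} -> R) (x : V -> R) (y : {set V} -> R).
Variables (VC : {set V}) (EC M : {set {set V}}) (i0 : V).
Hypothesis simpleE : simple_graph E.
Hypothesis w01 : forall f, f \in E -> 0 <= w f <= 1.
Hypothesis feas : fc_feasible E x y.
Hypothesis EC_subE : EC \subset E.
Hypothesis EC_VC : forall g, g \in EC -> g \subset VC.
Hypothesis EC_neq0 : EC != set0.
Hypothesis mstM : min_spanning_tree w VC EC M.

Definition low_leaves := [set i in VC | (degree M i == 1%N) && (x i < 1 / 2)].
Definition VT := VC :\: low_leaves.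
Definition ET := edges_in M VT.

Lemma simpleEC : simple_graph EC. Proof. exact: simple_graphS EC_subE simpleE. Qed.
Lemma M_subEC : M \subset EC. Proof. by case: mstM => [[]]. Qed.
Lemma simpleM : simple_graph M. Proof. exact: simple_graphS M_subEC simpleEC. Qed.
Lemma connectM : forall i j, i \in VC -> j \in VC -> connect (adj M) i j.
Proof. by case: mstM => [[]]. Qed.
Lemma acyclicM : acyclic M. Proof. by case: mstM => [[]]. Qed.
Lemma M_subE : M \subset E. Proof. exact: subset_trans M_subEC EC_subE. Qed.

Lemma adjM_VC u v : adj M u v -> (u \in VC) && (v \in VC).
Proof.
move=> h; have := EC_VC (subsetP M_subEC _ h) => /subsetP s.
by rewrite !s // !inE eqxx ?orbT.
Qed.

Lemma adjM_cover u v : adj M u v -> 1 <= x u + x v.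
Proof. by case: feas => vc _ _ _ h; case: (vc u v (subsetP M_subE _ h)). Qed.

Lemma x_01 u : 0 <= x u <= 1. Proof. by case: feas. Qed.

Lemma y_ge0 f : f \in E -> 0 <= y f.
Proof. by case: feas => _ _ _ h /h /andP []. Qed.

Lemma VC_other u : u \in VC -> exists2 v, v \in VC & v != u.
Proof.
move=> uVC; case/set0Pn: EC_neq0 => f fEC.
case: (simple_edgeP simpleEC fEC) => [a [b [nab ef _]]].
have s := subsetP (EC_VC fEC).
case au: (a == u).
  by exists b; [apply: s; rewrite ef !inE eqxx orbT| rewrite -(eqP au) eq_sym].
by exists a; [apply: s; rewrite ef !inE eqxx| rewrite au].
Qed.

Lemma degreeM_gt0 u : u \in VC -> (0 < degree M u)%N.
Proof.
move=> uVC; case: (VC_other uVC) => v vVC nvu.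
case/connectP: (connectM uVC vVC) => [[|z p]] /=.
  by move=> _ e; move: nvu; rewrite e eqxx.
move=> /andP [auz _] _; rewrite card_gt0; apply/set0Pn; exists [set u; z].
by rewrite inE; apply/andP; split; [exact: auz | rewrite !inE eqxx].
Qed.

Lemma ET_subEC : ET \subset EC.
Proof. by apply: (subset_trans _ M_subEC); apply/subsetP => g; rewrite inE => /andP []. Qed.

Section Threshold.
Variable t : R.
Definition light := [set g in M | w g < t].
Definition croot u := fingraph.root (adj light) u.
Definition isolated u := ~~ [exists v, adj light u v].
Definition nonisolated := [set u in VC | ~~ isolated u].
Definition nonisolated_roots := [set croot u | u in nonisolated].
Definition VC_roots := [set croot u | u in VC].
Definition block (j : V) := [set u in VC | croot u == j].
Definition blocks (B : {set V}) := [set u in VC | croot u \in B].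
Definition rep (f : {set V}) := odflt i0 [pick v in f].

Lemma rep_in G g : simple_graph G -> g \in G -> rep g \in g.
Proof.
move=> sG gG; rewrite /rep; case: pickP => [//|none].
by case: (simple_edgeP sG gG) => [a [b [_ eg _]]]; move: (none a); rewrite eg !inE eqxx.
Qed.

Lemma light_subM : light \subset M. Proof. by apply/subsetP => g; rewrite inE => /andP []. Qed.
Lemma simple_light : simple_graph light. Proof. exact: simple_graphS light_subM simpleM. Qed.
Lemma adj_light_M u v : adj light u v -> adj M u v.
Proof. exact: (adjS light_subM). Qed.

Lemma connect_light_VC u v : connect (adj light) u v -> u \in VC -> v \in VC.
Proof.
move=> c uVC; have cl : closed (adj light) (mem VC).
  by move=> a b /adj_light_M /adjM_VC /andP [-> ->].
by rewrite -(closed_connect cl c).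
Qed.

Lemma isolated_connect u v : isolated u -> connect (adj light) u v -> v = u.
Proof.
move=> iu /connectP [[|z p]] //= /andP [a _] _.
by move: iu; rewrite /isolated; case/existsP; exists z.
Qed.

Lemma connect_nonisolated u v : connect (adj light) u v -> u != v -> ~~ isolated u.
Proof. by move=> c nuv; apply/negP => iu; move: nuv; rewrite (isolated_connect iu c) eqxx. Qed.

Lemma croot_eq u v : (croot u == croot v) = connect (adj light) u v.
Proof. exact: root_connect (connect_adjC light) u v. Qed.

Lemma block_root j : j \in VC_roots -> j \in block j.
Proof.
case/imsetP => u uVC ->; rewrite /block inE /croot (root_root (connect_adjC light)) eqxx andbT.
by apply: connect_light_VC uVC; apply: connect_root.
Qed.

Lemma block_connect j v : j \in VC_roots -> v \in block j -> connect (adj light) v j.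
Proof.
case/imsetP => u uVC ->; rewrite /block inE => /andP [_ /eqP e].
by rewrite -e; apply: connect_root.
Qed.

Lemma block_closed j u v : u \in block j -> adj light u v -> v \in block j.
Proof.
rewrite /block !inE => /andP [uVC /eqP e] a.
have c : connect (adj light) u v by apply: connect1.
rewrite (connect_light_VC c uVC) /= -e eq_sym croot_eq; exact: c.
Qed.

Lemma card_block_le j : j \in VC_roots -> (#|block j| <= (#|edges_in light (block j)|).+1)%N.
Proof.
move=> jR; apply: (connected_card_le_edges simple_light (block_root jR)).
  by move=> v; apply: block_connect.
by move=> u v; apply: block_closed.
Qed.

Lemma card_blocks_le (R' : {set V}) : R' \subset VC_roots ->
  (#|blocks R'| <= #|edges_in light (blocks R')| + #|R'|)%N.
Proof.
move=> sub; set N' := blocks R'.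
have h1 : #|N'| = (\sum_(j in R') #|block j|)%N.
  rewrite (@card_fibers _ _ N' R' croot); last by move=> u; rewrite inE => /andP [].
  apply: eq_bigr => j jR; apply: eq_card => u; rewrite /block !inE.
  by case: eqP => [->|_]; rewrite ?jR ?andbT ?andbF.
have h2 : (\sum_(j in R') #|edges_in light (block j)| <= #|edges_in light N'|)%N.
  rewrite (@card_fibers _ _ (edges_in light N') R' (fun g => croot (rep g))); last first.
    move=> g; rewrite inE => /andP [gF gN].
    have := subsetP gN _ (rep_in simpleM (subsetP light_subM _ gF)).
    by rewrite inE => /andP [].
  apply: leq_sum => j jR; apply: subset_leq_card; apply/subsetP => g.
  rewrite !inE => /andP [gF gB]; rewrite gF /=.
  have gN : g \subset N'.
    apply: (subset_trans gB); apply/subsetP => u; rewrite !inE => /andP [-> /eqP ->].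
    by rewrite jR.
  rewrite gN /=; case/andP: (gF) => gM _; have := rep_in simpleM gM.
  by move/(subsetP gB); rewrite inE => /andP [].
rewrite h1; apply: (leq_trans _ (leq_add h2 (leqnn _))).
rewrite -[#|R'|]sum1_card -big_split /=; apply: leq_sum => j jR.
by rewrite addn1; apply: card_block_le; apply: (subsetP sub).
Qed.

Lemma light_edge_connect f : f \in EC -> w f < t ->
  exists a b, [/\ a != b, f = [set a; b] & connect (adj light) a b].
Proof.
move=> fEC wf; case: (simple_edgeP simpleEC fEC) => [a [b [nab ef _]]]; exists a, b.
by split=> //; apply: (mst_cycle_property simpleEC EC_VC mstM); rewrite -ef.
Qed.

Lemma light_edge_croot f u : f \in EC -> w f < t -> u \in f -> croot u = croot (rep f).
Proof.
move=> fEC wf uf; case: (light_edge_connect fEC wf) => [a [b [nab ef c]]].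
have rf := rep_in simpleE (subsetP EC_subE _ fEC).
have rab : croot a = croot b by apply/eqP; rewrite croot_eq.
move: uf rf; rewrite ef !inE => /orP [/eqP ->|/eqP ->] /orP [/eqP ->|/eqP ->] //.
Qed.

Lemma light_edge_nonisolated f u : f \in EC -> w f < t -> u \in f -> ~~ isolated u.
Proof.
move=> fEC wf uf; case: (light_edge_connect fEC wf) => [a [b [nab ef c]]].
move: uf; rewrite ef !inE => /orP [/eqP ->|/eqP ->]; first exact: connect_nonisolated c nab.
by rewrite (connect_adjC light) in c; apply: connect_nonisolated c _; rewrite eq_sym.
Qed.

Lemma nonisolated_croot u : u \in VC -> croot u \in nonisolated_roots -> u \in nonisolated.
Proof.
move=> uVC /imsetP [v vNT /eqP]; rewrite croot_eq => c.
rewrite inE uVC /=; case: (eqVneq u v) => [->|nuv]; last exact: connect_nonisolated c nuv.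
by move: vNT; rewrite inE => /andP [].
Qed.

(* The LP constraint for [S = block j]: by the cycle property every light edge of [EC]
   lies inside a single block. *)
Lemma lp_block_bound j : j \in nonisolated_roots ->
  1 <= \sum_(u in block j) x u
       - \sum_(f | (f \in EC) && (w f < t) && (croot (rep f) == j)) y f.
Proof.
case/imsetP => v vNT ej.
have vVC : v \in VC by move: vNT; rewrite inE => /andP [].
have ne : edges_in E (block j) != set0.
  move: vNT; rewrite inE => /andP [_ /negPn /existsP [z avz]].
  apply/set0Pn; exists [set v; z]; rewrite inE; apply/andP; split.
    by apply: (subsetP M_subE); apply: adj_light_M.
  have vB : v \in block j by rewrite /block inE vVC ej eqxx.
  by apply/subsetP => u /set2P [->|->] //; apply: block_closed vB avz.
case: feas => _ hS _ _; apply: (le_trans (hS _ ne)); rewrite lerD2l lerN2.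
apply: ler_sum_subpred => [f /andP [/andP [fEC wf] /eqP e]|f]; last first.
  by rewrite inE => /andP [fE _]; apply: y_ge0.
rewrite inE (subsetP EC_subE _ fEC) /=; apply/subsetP => u uf.
by rewrite /block inE (subsetP (EC_VC fEC) _ uf) /= (light_edge_croot fEC wf uf) e eqxx.
Qed.

Lemma lp_bound_nonisolated : (#|nonisolated_roots|%:R : R) <=
  \sum_(u in nonisolated) x u - \sum_(f in EC | w f < t) y f.
Proof.
rewrite (partition_big croot (mem nonisolated_roots)); last by move=> u uNT; apply: imset_f.
rewrite [X in _ - X](partition_big (croot \o rep) (mem nonisolated_roots)); last first.
  move=> f /andP [fEC wf]; apply/imsetP; exists (rep f) => //.
  have rf := rep_in simpleE (subsetP EC_subE _ fEC).
  by rewrite inE (subsetP (EC_VC fEC) _ rf) (light_edge_nonisolated fEC wf rf).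
rewrite -sumrB -[X in X <= _]mulr1n -sumr_const; apply: ler_sum => j jR.
have -> : \sum_(u in nonisolated | croot u == j) x u = \sum_(u in block j) x u.
  apply: eq_bigl => u; rewrite /block !inE.
  case: (eqVneq (croot u) j) => [e|]; rewrite ?andbT ?andbF //.
  case uVC: (u \in VC) => //=.
  have : u \in nonisolated by apply: nonisolated_croot uVC _; rewrite e.
  by rewrite inE uVC.
exact: lp_block_bound.
Qed.

Lemma nonisolated_roots_VC : nonisolated_roots \subset VC_roots.
Proof.
apply/subsetP => j /imsetP [v vNT ->]; apply: imset_f.
by move: vNT; rewrite inE => /andP [].
Qed.

Lemma card_nonisolated_le : (#|nonisolated| <= #|light| + #|nonisolated_roots|)%N.
Proof.
have := card_blocks_le nonisolated_roots_VC.
have -> : blocks nonisolated_roots = nonisolated.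
  apply/setP => u; rewrite inE; case uVC: (u \in VC) => /=; last first.
    by rewrite inE uVC.
  apply/idP/idP; first exact: nonisolated_croot.
  by move=> uNT; apply: imset_f.
move=> h; apply: (leq_trans h); rewrite leq_add2r; apply: subset_leq_card.
by apply/subsetP => g; rewrite inE => /andP [].
Qed.

Definition leaf_light := [set g in light | [exists z in low_leaves, z \in g]].

Lemma light_sub_ET_leaf : light \subset [set g in ET | w g < t] :|: leaf_light.
Proof.
apply/subsetP => g gF; rewrite in_setU; apply/orP.
case ex: [exists z in low_leaves, z \in g]; first by right; rewrite inE gF ex.
left; move: (gF); rewrite inE => /andP [gM wg].
rewrite inE wg andbT /ET inE gM /=; apply/subsetP => u ug.
rewrite /VT in_setD (subsetP (EC_VC (subsetP M_subEC _ gM)) _ ug) andbT.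
by apply/negP => uL; move/negbT/negP: ex; apply; apply/existsP; exists u; rewrite uL ug.
Qed.

(* A pruned leaf lies on exactly one edge of [M], so mapping a light edge to one of its
   pruned endpoints is injective. *)
Lemma card_leaf_light_le : (#|leaf_light| <= #|nonisolated :&: low_leaves|)%N.
Proof.
pose phi (g : {set V}) := odflt i0 [pick z in low_leaves | z \in g].
have phiP g : g \in leaf_light -> (phi g \in low_leaves) && (phi g \in g).
  rewrite inE => /andP [_ /existsP [z /andP [zL zg]]].
  rewrite /phi; case: pickP => [v /andP [-> ->] //|none].
  by move: (none z); rewrite zL zg.
have inj : {in leaf_light &, injective phi}.
  move=> g1 g2 h1 h2 e.
  have /andP [zL z1] := phiP _ h1; have /andP [_ z2] := phiP _ h2.
  rewrite -e in z2.
  have g1M : g1 \in M by move: h1; rewrite !inE => /andP [/andP []].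
  have g2M : g2 \in M by move: h2; rewrite !inE => /andP [/andP []].
  move: zL; rewrite inE => /andP [_ /andP [/cards1P [g0 eg] _]].
  have : g1 \in [set f in M | phi g1 \in f] by rewrite inE g1M z1.
  have : g2 \in [set f in M | phi g1 \in f] by rewrite inE g2M z2.
  by rewrite eg !inE => /eqP -> /eqP ->.
rewrite -(card_in_imset inj); apply: subset_leq_card; apply/subsetP => z.
case/imsetP => g gH ->; have /andP [zL zg] := phiP _ gH.
rewrite in_setI zL andbT inE; move: (zL); rewrite inE => /andP [-> _] /=.
move: gH; rewrite inE => /andP [gF _].
case: (edge_through simple_light gF zg) => v [_ a].
by rewrite /isolated negbK; apply/existsP; exists v.
Qed.

Lemma card_light_le :
  (#|light| <= #|[set g in ET | (w g < t)%R]| + #|nonisolated :&: low_leaves|)%N.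
Proof.
apply: (leq_trans (subset_leq_card light_sub_ET_leaf)).
apply: (leq_trans (leq_card_setU _ _)); rewrite leq_add2l.
exact: card_leaf_light_le.
Qed.

Definition isolated_VT := [set u in VC | isolated u && (u \in VT)].

Section LowIsolated.
Variable tau : R.

Definition low_iso := [set u in isolated_VT | (x u < 1/2) && (x u < tau)].
Definition high_iso := [set u in isolated_VT | ~~ (x u < 1/2) && (1 - x u < tau)].
Definition low_star := [set g in M | [exists l in low_iso, l \in g]].
Definition low_nbrs := [set v | [exists l in low_iso, adj M l v]].
Definition low_nbr_roots := [set croot v | v in low_nbrs & ~~ isolated v].
Definition low_span :=
  low_iso :|: [set v in low_nbrs | isolated v] :|: blocks low_nbr_roots.

Lemma low_isoP l : l \in low_iso ->
  [/\ l \in VC, isolated l, l \in VT, x l < 1/2 & x l < tau].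
Proof.
by rewrite /low_iso /isolated_VT !inE => /andP [/andP [-> /andP [-> ->]] /andP [-> ->]].
Qed.

Lemma low_iso_nbr l v : l \in low_iso -> adj M l v ->
  [/\ v \in VC, 1/2 < x v & 1 - x v < tau].
Proof.
move=> lLo a; case: (low_isoP lLo) => _ _ _ lx lt.
have h := adjM_cover a; have /andP [_ ->] := adjM_VC a.
by split=> //; lra.
Qed.

Lemma low_iso_edge_uniq l1 l2 g : l1 \in low_iso -> l2 \in low_iso ->
  g \in M -> l1 \in g -> l2 \in g -> l1 = l2.
Proof.
move=> h1 h2 gM i1 i2; case: (edge_through simpleM gM i1) => v [eg a].
move: i2; rewrite eg !inE => /orP [/eqP -> //|/eqP ev].
case: (low_iso_nbr h1 a) => _ xv _; case: (low_isoP h2) => _ _ _ x2 _.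
by move: xv; rewrite -ev => xv; move: (lt_trans xv x2); rewrite ltxx.
Qed.

(* A low vertex of [VT] was not pruned, so it is not a leaf of [M]. *)
Lemma low_iso_degree l : l \in low_iso -> (2 <= degree M l)%N.
Proof.
move=> lLo; case: (low_isoP lLo) => lVC _ lVT lx _.
have d0 := degreeM_gt0 lVC.
have : degree M l != 1%N.
  apply/eqP => d1; move: lVT; rewrite /VT in_setD => /andP [/negP nL _]; apply: nL.
  by rewrite /low_leaves inE lVC d1 eqxx lx.
by case: (degree M l) d0 => [|[|n]].
Qed.

Lemma low_nbrsP v : v \in low_nbrs -> exists2 l, l \in low_iso & adj M l v.
Proof. by rewrite inE => /existsP [l /andP [? ?]]; exists l. Qed.

Lemma low_nbrs_high : [set v in low_nbrs | isolated v] \subset high_iso.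
Proof.
apply/subsetP => v; rewrite inE => /andP [vNb iv]; case: (low_nbrsP vNb) => l lLo a.
case: (low_iso_nbr lLo a) => vVC xv tv.
have nx : ~~ (x v < 1/2) by rewrite -leNgt; apply: ltW.
by rewrite /high_iso /isolated_VT !inE vVC iv tv andbT /= nx /= (negbTE nx) andbF.
Qed.

Lemma low_nbr_roots_sub : low_nbr_roots \subset nonisolated_roots.
Proof.
apply/subsetP => j /imsetP [v vN ->]; apply: imset_f.
move: vN; rewrite inE => /andP [vNb nv]; case: (low_nbrsP vNb) => l lLo a.
by case: (low_iso_nbr lLo a) => vVC _ _; rewrite inE vVC nv.
Qed.

(* Low vertices are pairwise non-adjacent in [M], so their stars are disjoint. *)
Lemma card_low_star : (2 * #|low_iso| <= #|low_star|)%N.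
Proof.
pose p (g : {set V}) := odflt i0 [pick l in low_iso | l \in g].
have pP g : g \in low_star -> (p g \in low_iso) && (p g \in g).
  rewrite inE => /andP [_ /existsP [l /andP [lLo lg]]].
  rewrite /p; case: pickP => [v /andP [-> ->] //|none].
  by move: (none l); rewrite lLo lg.
rewrite (@card_fibers _ _ low_star low_iso p); last by move=> g /pP /andP [].
rewrite mulnC -sum_nat_const; apply: leq_sum => l lLo.
apply: (leq_trans (low_iso_degree lLo)); apply: subset_leq_card; apply/subsetP => g.
rewrite inE => /andP [gM lg].
have gH : g \in low_star by rewrite inE gM; apply/existsP; exists l; rewrite lLo lg.
rewrite inE gH /=; have /andP [pL pg] := pP g gH.
by rewrite (low_iso_edge_uniq pL lLo gM pg lg).
Qed.

(* Every star edge contains an isolated vertex, so no star edge is light. *)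
Lemma low_star_span :
  (#|low_star| + #|edges_in light (blocks low_nbr_roots)| <= #|edges_in M low_span|)%N.
Proof.
have HS : low_star \subset edges_in M low_span.
  apply/subsetP => g; rewrite inE => /andP [gM /existsP [l /andP [lLo lg]]].
  rewrite inE gM /=; case: (edge_through simpleM gM lg) => v [eg a].
  rewrite eg; apply/subsetP => u /set2P [->|->]; first by rewrite !in_setU lLo.
  have vNb : v \in low_nbrs by rewrite inE; apply/existsP; exists l; rewrite lLo.
  rewrite !in_setU; case iv: (isolated v); first by rewrite inE vNb iv orbT.
  case: (low_iso_nbr lLo a) => vVC _ _.
  by apply/orP; right; rewrite inE vVC /=; apply: imset_f; rewrite inE vNb iv.
have FS : edges_in light (blocks low_nbr_roots) \subset edges_in M low_span.
  apply/subsetP => g; rewrite inE => /andP [gF gN]; rewrite inE (subsetP light_subM _ gF) /=.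
  by apply: (subset_trans gN); apply/subsetP => u uN; rewrite in_setU uN orbT.
have dis : [disjoint low_star & edges_in light (blocks low_nbr_roots)].
  rewrite -setI_eq0; apply/eqP/setP => g; rewrite in_set0 in_setI.
  apply/negP => /andP [gH gF]; move: gH; rewrite inE => /andP [_ /existsP [l /andP [lLo lg]]].
  move: gF; rewrite inE => /andP [gF _]; case: (edge_through simple_light gF lg) => v [_ a].
  case: (low_isoP lLo) => _ il _ _ _; move: il; rewrite /isolated => /negP; apply.
  by apply/existsP; exists v.
rewrite -(leq_card_setU low_star (edges_in light (blocks low_nbr_roots))) in dis.
by rewrite -(eqP dis); apply: subset_leq_card; rewrite subUset HS FS.
Qed.

(* The forest [M] has fewer edges than vertices on [low_span], and at least
   [2 #|low_iso|] of its edges there form the star. *)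
Lemma card_low_iso_le : (#|low_iso| <= #|nonisolated_roots| + #|high_iso|)%N.
Proof.
case: (set_0Vmem low_iso) => [-> | [l0 l0Lo]]; first by rewrite cards0.
have Sne : low_span != set0 by apply/set0Pn; exists l0; rewrite !in_setU l0Lo.
have fe := acyclic_card_edges_lt simpleM acyclicM Sne.
have cS : (#|low_span| <=
    #|low_iso| + #|[set v in low_nbrs | isolated v]| + #|blocks low_nbr_roots|)%N.
  by apply: (leq_trans (leq_card_setU _ _)); rewrite leq_add2r; exact: leq_card_setU.
have hTS := card_blocks_le (subset_trans low_nbr_roots_sub nonisolated_roots_VC).
have c1 := subset_leq_card low_nbrs_high.
have c2 := subset_leq_card low_nbr_roots_sub.
have c3 := card_low_star; have c4 := low_star_span.
lia.
Qed.

End LowIsolated.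

Lemma isolated_VT_excess :
  0 <= (#|nonisolated_roots|%:R : R) / 2 + \sum_(u in isolated_VT) (x u - 1/2).
Proof.
pose a u := if x u < 1/2 then x u else 1 - x u.
pose c u : R := if x u < 1/2 then -1 else 1.
have H := @layer_cake_ge0 R V isolated_VT a c (#|nonisolated_roots|%:R) (1/2).
have eS : \sum_(i in isolated_VT) c i * (1 / 2 - a i) = \sum_(u in isolated_VT) (x u - 1/2).
  apply: eq_bigr => u _; rewrite /a /c; case: (x u < 1/2); rewrite /=; lra.
have hs : (0 : R) <= 1/2 by lra.
have ha : forall u, u \in isolated_VT -> 0 <= a u <= 1/2.
  move=> u _; rewrite /a; have /andP [h0 h1] := x_01 u; case: ifP => h; apply/andP; split; lra.
suff hc : forall tau, 0 <= #|nonisolated_roots|%:R + \sum_(u in isolated_VT | a u < tau) c u.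
  by have := H hs ha hc; rewrite eS => h; lra.
move=> tau.
have e1 : \sum_(u in isolated_VT | a u < tau) c u =
    \sum_(u in [set u in isolated_VT | (x u >= 1/2) && (1 - x u < tau)]) 1
  - \sum_(u in [set u in isolated_VT | (x u < 1/2) && (x u < tau)]) 1.
  rewrite (bigID (fun u => x u < 1/2)) /= addrC; congr (_ + _).
    apply: eq_big => u; rewrite ?inE /a /c.
      by rewrite leNgt; case: (x u < 1/2); rewrite ?andbF ?andbT.
    by move=> /andP [_ /negbTE ->].
  rewrite -sumrN; apply: eq_big => u; rewrite ?inE /a /c.
    by case: (x u < 1/2); rewrite ?andbF ?andbT.
  by move=> /andP [_ ->].
rewrite e1 !sumr_const.
have := card_low_iso_le tau; rewrite /low_iso /high_iso.
set n1 := #|[set u in isolated_VT | _ && _]|; set n2 := #|[set u in isolated_VT | _ && _]|.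
have -> : #|[set u in isolated_VT | (1/2 <= x u) && (1 - x u < tau)]| = n2.
  by apply: eq_card => u; rewrite !inE -leNgt.
move=> h; have : (n1%:R : R) <= (#|nonisolated_roots| + n2)%:R by rewrite ler_nat.
rewrite natrD => h'.
have -> : (1 : R) *+ n2 = n2%:R by [].
have -> : (1 : R) *+ n1 = n1%:R by [].
lra.
Qed.

Lemma card_VT_decomp :
  (#|VT| + #|nonisolated :&: low_leaves| = #|nonisolated| + #|isolated_VT|)%N.
Proof.
rewrite -(cardsID nonisolated VT) -(cardsID VT nonisolated) setIC.
have -> : VT :\: nonisolated = isolated_VT.
  apply/setP => u; rewrite /VT /isolated_VT /nonisolated !inE.
  by case: (u \in VC); case: (isolated u); case: (degree M u == 1%N); case: (x u < 1/2).
have -> : nonisolated :\: VT = nonisolated :&: low_leaves.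
  apply/setP => u; rewrite /VT /nonisolated !inE.
  by case: (u \in VC); case: (isolated u); case: (degree M u == 1%N); case: (x u < 1/2).
by rewrite -!addnA [(#|isolated_VT| + _)%N]addnC.
Qed.

Lemma sum_light_EC :
  \sum_(f in EC | w f < t) (- y f + (if f \in ET then 1/2 else 0)) =
  - \sum_(f in EC | w f < t) y f + 1/2 * #|[set g in ET | w g < t]|%:R.
Proof.
rewrite big_split /= sumrN; congr (_ + _).
rewrite (bigID (fun f => f \in ET)) /= [X in _ + X]big1 ?addr0; last first.
  by move=> f /andP [_ /negbTE ->].
rewrite (@eq_bigr _ _ _ _ _ _ _ (fun _ => 1/2)); last by move=> f /andP [_ ->].
rewrite (@eq_bigl _ _ _ _ _ _ (fun f => f \in [set g in ET | w g < t])); last first.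
  move=> f; rewrite [in RHS]inE; case fET: (f \in ET); rewrite ?andbF ?andbT //=.
  by rewrite (subsetP ET_subEC _ fET).
by rewrite sumr_const mulr_natr mulrC.
Qed.

Lemma threshold_bound : 0 <= (\sum_(u in VC) x u - 1/2 * #|VT|%:R) +
   \sum_(f in EC | w f < t) (- y f + (if f \in ET then 1/2 else 0)).
Proof.
have eX : \sum_(u in VC) x u = \sum_(u in nonisolated) x u + \sum_(u in VC | isolated u) x u.
  rewrite (bigID isolated) /= addrC; congr (_ + _).
  by apply: eq_bigl => u; rewrite inE.
have hI : \sum_(u in isolated_VT) x u <= \sum_(u in VC | isolated u) x u.
  apply: ler_sum_subpred => [u|u _]; last by case/andP: (x_01 u).
  by rewrite inE => /andP [-> /andP [-> _]].
have hA := lp_bound_nonisolated.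
have hB : (#|nonisolated|%:R : R) <= #|light|%:R + #|nonisolated_roots|%:R.
  by rewrite -natrD ler_nat card_nonisolated_le.
have hC : (#|light|%:R : R) <=
    #|[set g in ET | w g < t]|%:R + #|nonisolated :&: low_leaves|%:R.
  by rewrite -natrD ler_nat card_light_le.
have hD := isolated_VT_excess.
have hE : (#|VT|%:R : R) + #|nonisolated :&: low_leaves|%:R =
    #|nonisolated|%:R + #|isolated_VT|%:R by rewrite -!natrD card_VT_decomp.
have eI : \sum_(u in isolated_VT) (x u - 1/2) =
    \sum_(u in isolated_VT) x u - 1/2 * #|isolated_VT|%:R.
  by rewrite sumrB sumr_const mulr_natr mulrC.
rewrite sum_light_EC eX; rewrite eI in hD; lra.
Qed.

End Threshold.

Lemma component_bound : 1 / 2 * (#|VT|%:R - \sum_(f in ET) (1 - w f)) <=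
  \sum_(i in VC) x i - \sum_(f in EC) y f * (1 - w f).
Proof.
pose c f := - y f + (if f \in ET then 1/2 else 0).
have := @layer_cake_ge0 R _ EC w c (\sum_(u in VC) x u - 1/2 * #|VT|%:R) 1 ler01 _ _.
have wEC : forall f, f \in EC -> 0 <= w f <= 1 by move=> f /(subsetP EC_subE); apply: w01.
move=> /(_ wEC) /(_ threshold_bound).
have e : \sum_(f in EC) c f * (1 - w f) =
  - \sum_(f in EC) y f * (1 - w f) + 1/2 * \sum_(f in ET) (1 - w f).
  rewrite /c (eq_bigr (fun f => - (y f * (1 - w f)) +
                                (if f \in ET then 1/2 * (1 - w f) else 0))); last first.
    by move=> f _; case: (f \in ET); ring.
  rewrite big_split /= sumrN; congr (_ + _).
  rewrite -big_mkcondr /= mulr_sumr.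
  apply: eq_bigl => f; case fET: (f \in ET); rewrite ?andbT ?andbF //.
  by rewrite (subsetP ET_subEC _ fET).
rewrite e mul1r => h; lra.
Qed.

End Component.

Local Open Scope ring_scope.

Theorem mainTheorem8 (R : realFieldType) (V : finType)
  (E : {set {set V}}) (w : {set V} -> R) (x : V -> R) (y : {set V} -> R)
  (i0 : V) (M : {set {set V}}) :
  simple_graph E ->
  (forall f, f \in E -> 0 <= w f <= 1) ->
  fc_optimal E w x y ->
  let Vstar := [set i | x i > 0] in
  let Estar := [set f in E | y f > 0] in
  i0 \in Vstar ->
  let VC := [set j | connect (adj Estar) i0 j] in
  let EC := edges_in Estar VC in
  EC != set0 ->
  min_spanning_tree w VC EC M ->
  let L := [set i in VC | (degree M i == 1%N) && (x i < 1 / 2)] in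
  let VT := VC :\: L in
  let ET := edges_in M VT in
  \sum_(i in VC) x i - \sum_(f in EC) y f * (1 - w f)
    >= 1 / 2 * (#|VT|%:R - \sum_(f in ET) (1 - w f)).
Proof.
move=> simpleE w01 [feas _] Vstar Estar _ VC EC EC_neq0 mstM.
have EC_subE : EC \subset E.
  by apply/subsetP => g; rewrite !inE => /andP [/andP [] ].
have EC_VC : forall g, g \in EC -> g \subset VC by move=> g; rewrite inE => /andP [].
exact: (component_bound i0 simpleE w01 feas EC_subE EC_VC EC_neq0 mstM).
Qed.
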